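(* Let $\mathcal L_0,\mathcal L_1$ be as described in the context and $\mathcal L_N=\mathcal L_0+\mathcal P_N\mathcal L_1\mathcal P_N$. For any $c>0$, for all sufficiently large $N$, $$\sigma(\mathcal L_0+\mathcal P_N\mathcal L_1;\operatorname{ran}\mathcal P_N)\cap\{z\in\mathbb C:|z|\le cN^{k-1}\}=\sigma(\mathcal L_N;L^2(\mathbb T))\cap\{z\in\mathbb C:|z|\le cN^{k-1}\}.$$
   Context: $\mathbb T=[0,2\pi)$ with endpoints identified; $e_j(\theta)=e^{ij\theta}$, $u_j=\frac1{2\pi}\int_0^{2\pi}u\bar e_j\,d\theta$; $H^s(\mathbb T)$ the Sobolev space with norm $\|u\|_s^2=c_{|s|}\sum_j|u_j|^2\max\{1,|j|\}^{2s}$. For $N\ge1$, $N_-=\lfloor N/2\rfloor$, $N_+=\lfloor(N-1)/2\rfloor$, $\mathcal P_Nu=\sum_{j=-N_-}^{N_+}u_je_j$. Fix integers $k\ge1$, $0\le p<k$, $0\le q\le k$, $\ell\ge1$, constants $c_q,\dots,c_k\in\mathbb C$ with $c_k\ne0$, and $a_0,\dots,a_p\in H^\ell(\mathbb T)$; $\mathcal L_0u=\sum_{j=q}^kc_j\frac{d^ju}{d\theta^j}$, $\mathcal L_1u=\sum_{j=0}^pa_j\frac{d^ju}{d\theta^j}$. $\sigma(\mathcal L_0+\mathcal P_N\mathcal L_1;\operatorname{ran}\mathcal P_N)$ is the spectrum (set of eigenvalues) of the restriction of $\mathcal L_0+\mathcal P_N\mathcal L_1$ to the finite-dimensional invariant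 space $\operatorname{ran}\mathcal P_N$; $\sigma(\mathcal L_N;L^2(\mathbb T))$ is the spectrum of $\mathcal L_N$ acting on $L^2(\mathbb T)$ (with domain $H^k(\mathbb T)$). *)

(* Everything is expressed on the Fourier side: a function u in L^2(T) is
   represented by its Fourier coefficient sequence (u_j)_{j in Z}, u : int -> R[i]. *)
From HB Require Import structures.
From mathcomp Require Import all_boot all_order all_algebra.
From mathcomp Require Import reals complex.
Set Implicit Arguments. Unset Strict Implicit. Unset Printing Implicit Defensive.
Import Order.TTheory GRing.Theory Num.Theory.
Local Open Scope ring_scope.
Local Open Scope complex_scope.

Section Defs.
Variable R : realType.
Local Notation C := R[i].

Definition sqn (z : C) : R := (@complex.Re R z) ^+ 2 + (@complex.Im R z) ^+ 2.

Definition cabs (z : C) : R := Num.sqrt (sqn z).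

(* u belongs to H^s(T): sum_j |u_j|^2 max{1,|j|}^{2s} < oo
   (nonnegative terms: bounded symmetric partial sums). H^0 = L^2. *)
Definition in_H (s : nat) (u : int -> C) : Prop :=
  exists M : R, forall n : nat,
    \sum_(i < (2 * n).+1) sqn (u (i%:Z - n%:Z)) * ((maxn 1 `|i%:Z - n%:Z|%N) ^ (2 * s))%:R <= M.

(* Fourier symbol of d^m/dtheta^m at frequency j : (i j)^m *)
Definition dsym (m : nat) (j : int) : C := ('i * j%:~R) ^+ m.

(* symbol of L_0 = sum_{m=q}^k c_m d^m/dtheta^m *)
Definition sym0 (k q : nat) (c : nat -> C) (j : int) : C :=
  \sum_(q <= m < k.+1) c m * dsym m j.

Definition inRange (N : nat) (j : int) : bool :=
  (- (N./2)%:Z <= j) && (j <= (N.-1)./2%:Z).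

Definition PN (N : nat) (u : int -> C) : int -> C :=
  fun j => if inRange N j then u j else 0.

(* Fourier coefficients of P_N L_1 P_N u, where L_1 u = sum_{m<=p} a_m d^m u,
   a : nat -> (int -> C) gives the Fourier coefficients of a_0..a_p.
   The product a_m * (d^m P_N u) has coefficients given by the (finite)
   convolution sum_{l in range} (a_m)_{j-l} (i l)^m u_l. *)
Definition PL1P (N p : nat) (a : nat -> int -> C) (u : int -> C) : int -> C :=
  fun j => if inRange N j then
    \sum_(m < p.+1) \sum_(t < N)
       let l := t%:Z - (N./2)%:Z in a m (j - l) * dsym m l * u l
  else 0.

Definition LN (N k q p : nat) (c : nat -> C) (a : nat -> int -> C) (u : int -> C)
  : int -> C :=
  fun j => sym0 k q c j * u j + PL1P N p a u j.

(* z in sigma(L_0 + P_N L_1 ; ran P_N): z is an eigenvalue of the restriction of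
   L_0 + P_N L_1 to ran P_N (on ran P_N, P_N L_1 u = P_N L_1 P_N u). *)
Definition spec_fin (N k q p : nat) (c : nat -> C) (a : nat -> int -> C) (z : C)
  : Prop :=
  exists u : int -> C,
    (forall j, ~~ inRange N j -> u j = 0) /\ (exists j, u j != 0) /\
    (forall j, inRange N j -> LN N k q p c a u j = z * u j).

(* z in sigma(L_N ; L^2(T)) with domain H^k: L_N - z : H^k -> L^2 is not bijective *)
Definition spec_L2 (N k q p : nat) (c : nat -> C) (a : nat -> int -> C) (z : C)
  : Prop :=
  ~ (forall f : int -> C, in_H 0 f ->
       exists u : int -> C, in_H k u /\
         (forall j, LN N k q p c a u j - z * u j = f j) /\
         (forall v : int -> C, in_H k v ->
            (forall j, LN N k q p c a v j - z * v j = f j) -> v = u)).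

End Defs.

(** On the Fourier side, L_N - z is block diagonal with respect to
    ran P_N (+) ker P_N: on ran P_N it is the N x N matrix of
    L_0 + P_N L_1 - z, and on ker P_N it is the Fourier multiplier
    sym0 j - z. For |j| >= N/2 the leading term c_k (i j)^k dominates both the
    lower-order terms and |z| <= c N^(k-1) once N is large, so
    |sym0 j - z| >= |c_k| |j|^k / 2. Hence the multiplier part is an
    isomorphism from H^k onto L^2, and L_N - z : H^k -> L^2 is bijective
    exactly when the matrix is invertible, i.e. when z is not an eigenvalue
    of the finite section. *)
From HB Require Import structures.
From mathcomp Require Import all_boot all_order all_algebra.
From mathcomp Require Import reals complex.
From mathcomp Require Import zify ring lra.
From Stdlib Require Import FunctionalExtensionality.
Import Order.TTheory GRing.Theory Num.Theory.
Local Open Scope ring_scope.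
Local Open Scope complex_scope.
Set Implicit Arguments. Unset Strict Implicit. Unset Printing Implicit Defensive.

Section Fourier.
Variable R : realType.
Local Notation C := R[i].

Lemma cabsE (z : C) : (cabs z)%:C = `|z|.
Proof. by rewrite normc_def. Qed.

Lemma realC_inj (x y : R) : x%:C = y%:C -> x = y.
Proof. by case. Qed.

Lemma sqn_ge0 (z : C) : 0 <= sqn z.
Proof. by rewrite /sqn addr_ge0 ?sqr_ge0. Qed.

Lemma cabs_ge0 (z : C) : 0 <= cabs z.
Proof. exact: sqrtr_ge0. Qed.

Lemma sqnE (z : C) : sqn z = cabs z ^+ 2.
Proof. by rewrite /cabs sqr_sqrtr ?sqn_ge0. Qed.

Lemma cabs_eq0 (x : C) : (cabs x == 0) = (x == 0).
Proof. by rewrite -(inj_eq (@realC_inj)) cabsE normr_eq0. Qed.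

Lemma cabs_gt0 (x : C) : (0 < cabs x) = (x != 0).
Proof. by rewrite lt_def cabs_eq0 cabs_ge0 andbT. Qed.

Lemma cabs0 : cabs (0 : C) = 0.
Proof. by apply/eqP; rewrite cabs_eq0. Qed.

Lemma cabsM (x y : C) : cabs (x * y) = cabs x * cabs y.
Proof. by apply: realC_inj; rewrite rmorphM /= !cabsE normrM. Qed.

Lemma cabsV (x : C) : cabs x^-1 = (cabs x)^-1.
Proof. by apply: realC_inj; rewrite fmorphV /= !cabsE normfV. Qed.

Lemma cabsX (x : C) n : cabs (x ^+ n) = cabs x ^+ n.
Proof. by apply: realC_inj; rewrite rmorphXn /= !cabsE normrX. Qed.

Lemma cabsN (x : C) : cabs (- x) = cabs x.
Proof. by apply: realC_inj; rewrite !cabsE normrN. Qed.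

Lemma lerB_cabs (x y : C) : cabs x - cabs y <= cabs (x - y).
Proof. by rewrite -lecR rmorphB /= !cabsE lerB_dist. Qed.

Lemma cabs_sum (I : Type) (r : seq I) (F : I -> C) :
  cabs (\sum_(i <- r) F i) <= \sum_(i <- r) cabs (F i).
Proof.
elim: r => [|x r IH]; first by rewrite !big_nil -lecR cabsE normr0.
rewrite !big_cons; apply: le_trans (lerD (lexx _) IH).
by rewrite -lecR rmorphD /= !cabsE ler_normD.
Qed.

Lemma cabs_dsym m j : cabs (dsym R m j) = (`|j|%N)%:R ^+ m.
Proof.
rewrite /dsym cabsX cabsM; congr (_ ^+ _); apply: realC_inj.
by rewrite rmorphM /= !cabsE normCi mul1r rmorph_nat natr_absz -intr_norm.
Qed.

Lemma sym0_lead_bound k q (c : nat -> C) (j : int) : (q <= k)%N -> (1 <= `|j|)%N ->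
  cabs (c k) * (`|j|%N)%:R ^+ k - (\sum_(m < k) cabs (c m)) * (`|j|%N)%:R ^+ (k - 1)
  <= cabs (sym0 k q c j).
Proof.
move=> qk j1; set r : R := (`|j|%N)%:R; have r1 : 1 <= r by rewrite ler1n.
rewrite /sym0 big_nat_recr //= addrC.
rewrite -(opprK (\sum_(q <= i < k) _)); apply: le_trans (lerB_cabs _ _).
rewrite cabsM cabs_dsym -/r lerB // cabsN.
apply: le_trans (cabs_sum _ _) _; rewrite mulr_suml.
apply: (@le_trans _ _ (\sum_(q <= m < k) cabs (c m) * r ^+ (k - 1))).
  rewrite !big_nat; apply: ler_sum => m /andP [_ mk].
  rewrite cabsM cabs_dsym -/r ler_wpM2l ?cabs_ge0 // ler_weXn2l //; lia.
rewrite -(big_mkord xpredT (fun m => cabs (c m) * _)) (big_cat_nat (leq0n q) qk) /=.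
by rewrite lerDr sumr_ge0 // => m _; rewrite mulr_ge0 ?cabs_ge0 ?exprn_ge0 ?(le_trans ler01).
Qed.

Lemma sym0_sub_gap k q (c : nat -> C) (cc : R) (N : nat) (j : int) (z : C) :
  (1 <= k)%N -> (q <= k)%N -> 0 < cc -> c k != 0 -> (N <= 2 * `|j|)%N ->
  cabs z <= cc * N%:R ^+ (k - 1) ->
  4 * (\sum_(m < k) cabs (c m) + cc * 2 ^+ (k - 1)) <= cabs (c k) * N%:R ->
  ((maxn 1 `|j|) ^ k)%:R <= 2 / cabs (c k) * cabs (sym0 k q c j - z).
Proof.
move=> k1 qk cc0 ck0 Nj Hz HN.
set ck := cabs (c k) in HN *; set B := \sum_(m < k) _ in HN.
have ckp : 0 < ck by rewrite cabs_gt0.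
have B0 : 0 <= B by rewrite sumr_ge0 // => m _; exact: cabs_ge0.
have Dp : 0 < B + cc * 2 ^+ (k - 1) by rewrite ltr_wpDl // mulr_gt0 // exprn_gt0.
have N1 : (1 <= N)%N.
  by rewrite -(ltr0n R) -(pmulr_rgt0 _ ckp); apply: lt_le_trans HN; rewrite mulr_gt0.
have j1 : (1 <= `|j|)%N by lia.
have := sym0_lead_bound c qk j1; rewrite (maxn_idPr j1) natrX -/ck -/B.
set r : R := (`|j|%N)%:R => Hsym.
have r1 : 1 <= r by rewrite ler1n.
have Nr : N%:R <= 2 * r by rewrite -natrM ler_nat.
have Hzr : cabs z <= cc * 2 ^+ (k - 1) * r ^+ (k - 1).
  apply: le_trans Hz _; rewrite -mulrA -exprMn ler_wpM2l ?(ltW cc0) //.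
  by rewrite lerXn2r // nnegrE ?ler0n // mulr_ge0 // (le_trans ler01).
have rk : r ^+ k = r * r ^+ (k - 1) by rewrite -exprS; congr (_ ^+ _); lia.
have HDr : B + cc * 2 ^+ (k - 1) <= ck * r / 2.
  have : ck * N%:R <= ck * (2 * r) by rewrite ler_wpM2l // ltW.
  move: HN; generalize (ck * N%:R) (B + cc * 2 ^+ (k - 1)) => n D *; lra.
have P0 : 0 <= r ^+ (k - 1) by rewrite exprn_ge0 // (le_trans ler01).
have HP : 0 <= r ^+ (k - 1) * (ck * r / 2 - (B + cc * 2 ^+ (k - 1))).
  by rewrite mulr_ge0 // subr_ge0.
have := lerB_cabs (sym0 k q c j) z; rewrite mulrAC ler_pdivlMr // rk.
move: Hsym Hzr HP; rewrite rk.
generalize (r ^+ (k - 1)) (cabs z) (cabs (sym0 k q c j)) (cabs (sym0 k q c j - z)).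
move=> P az s d *; nra.
Qed.

Lemma sqnD_le (x y : C) : sqn (x + y) <= 2 * sqn x + 2 * sqn y.
Proof.
case: x => a b; case: y => c d; rewrite /sqn /=.
have := sqr_ge0 (a - c); have := sqr_ge0 (b - d); rewrite !expr2; nra.
Qed.

Lemma sqn0 : sqn (0 : C) = 0.
Proof. by rewrite /sqn /= expr0n addr0. Qed.

Lemma in_H0 s : in_H s (fun _ => 0 : C).
Proof. by exists 0 => n; rewrite big1 // => i _; rewrite sqn0 mul0r. Qed.

Lemma in_HD s (u v : int -> C) : in_H s u -> in_H s v -> in_H s (fun j => u j + v j).
Proof.
move=> [Mu Hu] [Mv Hv]; exists (2 * Mu + 2 * Mv) => n.
have two0 : 0 <= 2 :> R by [].
apply: le_trans (lerD (ler_wpM2l two0 (Hu n)) (ler_wpM2l two0 (Hv n))).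
rewrite !mulr_sumr -big_split /=.
by apply: ler_sum => i _; rewrite !mulrA -mulrDl ler_wpM2r ?sqnD_le.
Qed.

Lemma in_H_sum s (I : Type) (r : seq I) (g : I -> int -> C) :
  (forall i, in_H s (g i)) -> in_H s (fun j => \sum_(i <- r) g i j).
Proof.
move=> Hg; elim: r => [|x r IH].
  by have [M HM] := in_H0 s; exists M => n; under eq_bigr do rewrite big_nil.
have [M HM] := in_HD (Hg x) IH; exists M => n.
by under eq_bigr do rewrite big_cons.
Qed.

Lemma in_H_delta s (j0 : int) (y : C) : in_H s (fun j => if j == j0 then y else 0).
Proof.
exists (sqn y * ((maxn 1 `|j0|%N) ^ (2 * s))%:R) => n.
case: (pickP (fun i : 'I_(2 * n).+1 => i%:Z - n%:Z == j0)) => [i0 /eqP Hi0 | Hj0].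
  rewrite (bigD1 i0) //= big1 ?addr0 ?Hi0 ?eqxx // => i Hi.
  case: eqP => [E|_]; last by rewrite sqn0 mul0r.
  by move/eqP: Hi; case; apply: val_inj => /=; lia.
rewrite big1 ?mulr_ge0 ?sqn_ge0 // => i _.
by rewrite Hj0 sqn0 mul0r.
Qed.

Lemma in_H_dom s (u f : int -> C) (K : R) : 0 <= K ->
  (forall j, sqn (u j) * ((maxn 1 `|j|%N) ^ (2 * s))%:R <= K * sqn (f j)) ->
  in_H 0 f -> in_H s u.
Proof.
move=> K0 Hd [M HM]; exists (K * M) => n.
apply: le_trans (ler_sum _ (fun i _ => Hd _)) _.
rewrite -mulr_sumr ler_wpM2l //; apply: le_trans (HM n).
by under [X in _ <= X]eq_bigr do rewrite muln0 expn0 mulr1.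
Qed.

Definition freq N (t : 'I_N) : int := t%:Z - (N./2)%:Z.

Lemma inRange_freq N (t : 'I_N) : inRange N (freq t).
Proof. by have := ltn_ord t; rewrite /inRange /freq => Ht; apply/andP; split; lia. Qed.

Lemma freq_inj N : injective (@freq N).
Proof. by move=> t1 t2; rewrite /freq => E; apply: val_inj => /=; lia. Qed.

(* [0 < N] is needed: [inRange 0 0] holds since [0.-1 = 0], but ['I_0] is empty. *)
Lemma inRange_freqP N j : (0 < N)%N -> inRange N j -> exists t : 'I_N, j = freq t.
Proof.
rewrite /inRange => N0 /andP [H1 H2].
have Ht : (absz (j + (N./2)%:Z)%R < N)%N by lia.
by exists (Ordinal Ht); rewrite /freq /=; lia.
Qed.

Lemma notinRange_le N j : ~~ inRange N j -> (N <= 2 * `|j|)%N.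
Proof. by rewrite /inRange; lia. Qed.

Definition zext N (x : 'rV[C]_N) (j : int) : C :=
  \sum_(t < N) if j == freq t then x 0 t else 0.

Definition restr N (u : int -> C) : 'rV[C]_N := \row_t u (freq t).

Lemma zext_freq N (x : 'rV[C]_N) t : zext x (freq t) = x 0 t.
Proof.
rewrite /zext (bigD1 t) //= eqxx big1 ?addr0 // => s st.
by case: eqP => // /freq_inj E; rewrite E eqxx in st.
Qed.

Lemma zext_out N (x : 'rV[C]_N) j : ~~ inRange N j -> zext x j = 0.
Proof.
move=> Hj; rewrite /zext big1 // => t _; case: eqP => // E.
by rewrite E inRange_freq in Hj.
Qed.

Lemma in_H_zext s N (x : 'rV[C]_N) : in_H s (zext x).
Proof. by apply: in_H_sum => t; apply: in_H_delta. Qed.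

Lemma restr_zext N (x : 'rV[C]_N) : restr N (zext x) = x.
Proof. by apply/rowP => t; rewrite mxE zext_freq. Qed.

Lemma zext_restr N (u : int -> C) : (0 < N)%N ->
  (forall j, ~~ inRange N j -> u j = 0) -> zext (restr N u) = u.
Proof.
move=> N0 u_out; apply: functional_extensionality => j.
have [/(inRange_freqP N0) [t ->] | Hj] := boolP (inRange N j).
  by rewrite zext_freq mxE.
by rewrite zext_out ?u_out.
Qed.

Definition LN_mx N k q p (c : nat -> C) (a : nat -> int -> C) (z : C) : 'M[C]_N :=
  \matrix_(t, s) ((t == s)%:R * (sym0 k q c (freq s) - z) +
    \sum_(m < p.+1) a m (freq s - freq t) * dsym R m (freq t)).

Section Spectrum.
Variables (N k q p : nat) (c : nat -> C) (a : nat -> int -> C) (z : C).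
Local Notation M := (LN_mx N k q p c a z).

Lemma LN_sub_freq u t :
  LN N k q p c a u (freq t) - z * u (freq t) = (restr N u *m M) 0 t.
Proof.
rewrite /LN /PL1P inRange_freq !mxE.
under [RHS]eq_bigr do rewrite !mxE mulrDr.
rewrite big_split /=; set d := sym0 k q c (freq t) - z.
have -> : \sum_(s < N) u (freq s) * ((s == t)%:R * d) = u (freq t) * d.
  rewrite (bigD1 t) //= eqxx mul1r big1 ?addr0 // => s /negbTE ->.
  by rewrite mul0r mulr0.
under [in RHS]eq_bigr do rewrite mulr_sumr.
rewrite [X in _ = _ + X]exchange_big /=.
under [X in _ = _ + X]eq_bigr do under eq_bigr do rewrite mulrC.
rewrite /d; ring.
Qed.

Lemma LN_sub_out u j :
  ~~ inRange N j -> LN N k q p c a u j - z * u j = (sym0 k q c j - z) * u j.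
Proof. by move=> Hj; rewrite /LN /PL1P (negbTE Hj) addr0 mulrBl. Qed.

Hypothesis N_gt0 : (0 < N)%N.

Lemma LN_sub_zext_kernel x :
  x *m M = 0 -> forall j, LN N k q p c a (zext x) j - z * zext x j = 0.
Proof.
move=> xM j; have [/(inRange_freqP N_gt0) [t ->] | Hj] := boolP (inRange N j).
  by rewrite LN_sub_freq restr_zext xM mxE.
by rewrite LN_sub_out // zext_out // mulr0.
Qed.

Lemma spec_finE : spec_fin N k q p c a z <-> M \notin unitmx.
Proof.
rewrite unitmxE unitfE negbK; split.
  move=> [u [u_out [[j uj] u_eig]]]; apply/det0P; exists (restr N u).
    apply: contraNneq uj => u0.
    have [/(inRange_freqP N_gt0) [t ->] | /u_out -> //] := boolP (inRange N j).
    by move/rowP: u0 => /(_ t); rewrite !mxE => ->.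
  by apply/rowP => t; rewrite -LN_sub_freq u_eig ?inRange_freq // subrr mxE.
move=> /det0P [x x0 xM]; exists (zext x); split; first exact: zext_out.
split; last by move=> j _; apply/eqP; rewrite -subr_eq0 LN_sub_zext_kernel.
have [t xt] : exists t, x 0 t != 0.
  apply/existsP; apply: contraNT x0 => /existsPn x0.
  by apply/eqP/rowP => t; rewrite mxE; apply/eqP/negbNE.
by exists (freq t); rewrite zext_freq.
Qed.

Lemma singular_spec_L2 : M \notin unitmx -> spec_L2 N k q p c a z.
Proof.
rewrite unitmxE unitfE negbK => /det0P [x x0 xM] bij.
have [u [_ [_ u_uniq]]] := bij _ (in_H0 0).
have E := u_uniq _ (in_H_zext k x) (LN_sub_zext_kernel xM).
have E0 := u_uniq _ (in_H_zext k 0) (LN_sub_zext_kernel (mul0mx _ _)).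
by move: x0; rewrite -(restr_zext x) E -E0 restr_zext eqxx.
Qed.

Variable K : R.
Hypothesis sym_gap : forall j, ~~ inRange N j ->
  ((maxn 1 `|j|) ^ k)%:R <= K * cabs (sym0 k q c j - z).

Lemma sym0_sub_neq0 j : ~~ inRange N j -> sym0 k q c j - z != 0.
Proof.
move=> Hj; apply: contraTneq (sym_gap Hj) => ->.
by rewrite cabs0 mulr0 -ltNge ltr0n expn_gt0 leq_max.
Qed.

Definition tail_solve (f : int -> C) (j : int) : C :=
  if inRange N j then 0 else f j / (sym0 k q c j - z).

Lemma in_H_tail_solve f : in_H 0 f -> in_H k (tail_solve f).
Proof.
apply: (@in_H_dom _ _ _ (K ^+ 2)); first exact: sqr_ge0.
move=> j; rewrite /tail_solve; case: ifPn => Hj.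
  by rewrite sqn0 mul0r mulr_ge0 ?sqr_ge0 ?sqn_ge0.
have dp : 0 < cabs (sym0 k q c j - z) by rewrite cabs_gt0 sym0_sub_neq0.
rewrite !sqnE cabsM cabsV mulnC expnM natrX -!exprMn.
have le_Kf :
    cabs (f j) / cabs (sym0 k q c j - z) * ((maxn 1 `|j|) ^ k)%:R <= K * cabs (f j).
  rewrite mulrAC ler_pdivrMr // -mulrA mulrCA.
  by rewrite ler_wpM2l ?cabs_ge0 ?sym_gap.
have ge0 : 0 <= cabs (f j) / cabs (sym0 k q c j - z) * ((maxn 1 `|j|) ^ k)%:R.
  by rewrite mulr_ge0 ?divr_ge0 ?cabs_ge0 ?ler0n.
by rewrite lerXn2r ?nnegrE // (le_trans ge0).
Qed.

Lemma unitmx_LN_sub_bijective : M \in unitmx ->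
  forall f : int -> C, in_H 0 f ->
    exists u : int -> C, in_H k u /\
      (forall j, LN N k q p c a u j - z * u j = f j) /\
      (forall v : int -> C, in_H k v ->
         (forall j, LN N k q p c a v j - z * v j = f j) -> v = u).
Proof.
move=> Mu f f2; set x := restr N f *m invmx M.
have in_sol v : (forall j, LN N k q p c a v j - z * v j = f j) -> restr N v = x.
  move=> Hv; rewrite /x -[restr N v](mulmxK Mu); congr (_ *m _).
  by apply/rowP => t; rewrite -LN_sub_freq Hv mxE.
have out_sol v j : ~~ inRange N j -> LN N k q p c a v j - z * v j = f j ->
    v j = tail_solve f j.
  move=> Hj Hv; rewrite /tail_solve (negbTE Hj) -Hv LN_sub_out //.
  by rewrite [_ * v j]mulrC mulfK // sym0_sub_neq0.
set u := fun j => zext x j + tail_solve f j.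
have restr_u : restr N u = x.
  by apply/rowP => t; rewrite mxE /u zext_freq /tail_solve inRange_freq addr0.
exists u; split; first exact: in_HD (in_H_zext k x) (in_H_tail_solve f2).
split.
  move=> j; have [/(inRange_freqP N_gt0) [t ->] | Hj] := boolP (inRange N j).
    by rewrite LN_sub_freq restr_u mulmxKV // mxE.
  rewrite LN_sub_out // /u zext_out // add0r /tail_solve (negbTE Hj).
  by rewrite mulrC divfK ?sym0_sub_neq0.
move=> v _ Hv; apply: functional_extensionality => j.
have [/(inRange_freqP N_gt0) [t ->] | Hj] := boolP (inRange N j).
  by move: (in_sol v Hv); rewrite -restr_u => /rowP/(_ t); rewrite !mxE.
by rewrite (out_sol v j Hj (Hv j)) /u zext_out ?add0r.
Qed.

Lemma spec_L2E : spec_L2 N k q p c a z <-> M \notin unitmx.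
Proof.
split; last exact: singular_spec_L2.
by move=> HL; apply/negP => /unitmx_LN_sub_bijective.
Qed.

End Spectrum.

End Fourier.

Theorem mainTheorem11 (R : realType) (k p q l : nat) (c : nat -> R[i])
  (a : nat -> int -> R[i]) :
  (1 <= k)%N -> (p < k)%N -> (q <= k)%N -> (1 <= l)%N -> c k != 0 ->
  (forall m, (m <= p)%N -> in_H l (a m)) ->
  forall cc : R, 0 < cc ->
  exists N0 : nat, forall N : nat, (N0 <= N)%N ->
    forall z : R[i], cabs z <= cc * (N%:R) ^+ (k - 1) ->
      (spec_fin N k q p c a z <-> spec_L2 N k q p c a z).
Proof.
move=> k1 _ qk _ ck0 _ cc cc0.
set D := \sum_(m < k) cabs (c m) + cc * 2 ^+ (k - 1).
have ckp : 0 < cabs (c k) by rewrite cabs_gt0.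
exists (Num.truncn (4 * D / cabs (c k))).+1 => N N0N z Hz.
have N_gt0 : (0 < N)%N by apply: leq_trans N0N.
have HN : 4 * D <= cabs (c k) * N%:R.
  have := truncnS_gt (4 * D / cabs (c k)); rewrite ltr_pdivrMr // => /ltW /le_trans.
  by apply; rewrite mulrC ler_pM2l // ler_nat.
have gap j : ~~ inRange N j ->
    ((maxn 1 `|j|) ^ k)%:R <= 2 / cabs (c k) * cabs (sym0 k q c j - z).
  by move=> Hj; exact: sym0_sub_gap k1 qk cc0 ck0 (notinRange_le Hj) Hz HN.
by rewrite spec_finE // (spec_L2E p a N_gt0 gap).
Qed.
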